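(* Every Fréchet–Urysohn topological group $G$ has the property (PS).
   Context: A topological group $G$ (with unit $e$) has property (PS) if for every sequence $(g_n)_{n\in\mathbb{N}}$ in $G$ converging to $e$ there are strictly increasing sequences $(m_k)$ and $(n_k)$ of natural numbers such that $g_{n_k}^{m_k}\to e$, where $g^m=g\cdots g$ ($m$ times). A space is Fréchet–Urysohn if whenever $x\in\overline{A}$ there is a sequence in $A$ converging to $x$. *)

From Stdlib Require Import Arith.

Section Defs.
Context {G : Type}.

Definition is_topology (opn : (G -> Prop) -> Prop) : Prop :=
  opn (fun _ => True) /\
  (forall F : (G -> Prop) -> Prop, (forall U, F U -> opn U) ->
     opn (fun x => exists U, F U /\ U x)) /\
  (forall U V, opn U -> opn V -> opn (fun x => U x /\ V x)).

Definition is_group (mul : G -> G -> G) (inv : G -> G) (e : G) : Prop :=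
  (forall x y z, mul x (mul y z) = mul (mul x y) z) /\
  (forall x, mul e x = x) /\
  (forall x, mul (inv x) x = e).

Definition mul_continuous (opn : (G -> Prop) -> Prop) (mul : G -> G -> G) : Prop :=
  forall x y W, opn W -> W (mul x y) ->
    exists U V, opn U /\ opn V /\ U x /\ V y /\
      (forall a b, U a -> V b -> W (mul a b)).

Definition inv_continuous (opn : (G -> Prop) -> Prop) (inv : G -> G) : Prop :=
  forall x W, opn W -> W (inv x) ->
    exists U, opn U /\ U x /\ (forall a, U a -> W (inv a)).

Definition is_topological_group (opn : (G -> Prop) -> Prop)
  (mul : G -> G -> G) (inv : G -> G) (e : G) : Prop :=
  is_topology opn /\ is_group mul inv e /\
  mul_continuous opn mul /\ inv_continuous opn inv.

Definition seq_converges (opn : (G -> Prop) -> Prop) (s : nat -> G) (x : G) : Prop :=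
  forall U, opn U -> U x -> exists N, forall n, N <= n -> U (s n).

Definition in_closure (opn : (G -> Prop) -> Prop) (A : G -> Prop) (x : G) : Prop :=
  forall U, opn U -> U x -> exists a, A a /\ U a.

Definition frechet_urysohn (opn : (G -> Prop) -> Prop) : Prop :=
  forall (A : G -> Prop) (x : G), in_closure opn A x ->
    exists s : nat -> G, (forall n, A (s n)) /\ seq_converges opn s x.

Fixpoint gpow (mul : G -> G -> G) (e : G) (g : G) (m : nat) : G :=
  match m with
  | O => e
  | S m' => mul g (gpow mul e g m')
  end.

Definition strictly_increasing (f : nat -> nat) : Prop :=
  forall k, f k < f (S k).

Definition property_PS (opn : (G -> Prop) -> Prop) (mul : G -> G -> G) (e : G) : Prop :=
  forall g : nat -> G, seq_converges opn g e ->
    exists mk nk : nat -> nat,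
      strictly_increasing mk /\ strictly_increasing nk /\
      seq_converges opn (fun k => gpow mul e (g (nk k)) (mk k)) e.

End Defs.

(* Write N for the set of points lying in every neighbourhood of e; powers of
   points of N stay in N.  If g_n lies in N for infinitely many n, take m_k = k
   along those n.  Otherwise g_n is eventually outside N, and the points
   p(m, n) = g_n^m g_m (m <= n) accumulate at e while staying outside N:
   choose g_m near e and then n so large that g_n^m is near e.  For a fixed m,
   p(m, n) is kept off a neighbourhood of e for all large n because g_m is not
   in N, so a sequence p(m_j, n_j) -> e supplied by the Fréchet–Urysohn property
   has m_j -> oo.  Passing to a subsequence with m_{j+1} > n_j makes both indices
   strictly increasing, and g_{n_j}^{m_j} = p(m_j, n_j) g_{m_j}^-1 -> e. *)
From Stdlib Require Import Arith Lia Classical ClassicalEpsilon.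

Lemma strictly_increasing_ge (f : nat -> nat) :
  strictly_increasing f -> forall k, k <= f k.
Proof.
  intros Hf k; induction k as [|k IH]; [lia|].
  specialize (Hf k); lia.
Qed.

Lemma strictly_increasing_chain (R : nat -> nat -> Prop) :
  (forall j, exists j', j < j' /\ R j j') ->
  exists f : nat -> nat, strictly_increasing f /\ forall k, R (f k) (f (S k)).
Proof.
  intros HR.
  destruct (choice _ HR) as [next Hnext].
  exists (fix f k := match k with O => O | S k' => next (f k') end).
  split; intros k; apply Hnext.
Qed.

Section TopologicalGroup.

Variables (G : Type) (opn : (G -> Prop) -> Prop)
  (mul : G -> G -> G) (inv : G -> G) (e : G).
Hypothesis HG : is_topological_group opn mul inv e.

Lemma open_setT : opn (fun _ => True).
Proof. apply HG. Qed.

Lemma open_setI U V : opn U -> opn V -> opn (fun x => U x /\ V x).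
Proof. apply HG. Qed.

Lemma mulA x y z : mul x (mul y z) = mul (mul x y) z.
Proof. apply HG. Qed.

Lemma mul1g x : mul e x = x.
Proof. apply HG. Qed.

Lemma mulVg x : mul (inv x) x = e.
Proof. apply HG. Qed.

Lemma mulKg x y : mul (inv x) (mul x y) = y.
Proof. rewrite mulA, mulVg; apply mul1g. Qed.

Lemma mulgV x : mul x (inv x) = e.
Proof.
  rewrite <- (mulKg (inv x) (mul x (inv x))), (mulKg x (inv x)).
  apply mulVg.
Qed.

Lemma mulg1 x : mul x e = x.
Proof. rewrite <- (mulVg x), mulA, mulgV; apply mul1g. Qed.

Lemma mulgK x y : mul (mul x y) (inv y) = x.
Proof. rewrite <- mulA, mulgV; apply mulg1. Qed.

Lemma invg1 : inv e = e.
Proof. rewrite <- (mulg1 (inv e)); apply mulVg. Qed.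

Lemma mul_nbhs_e U : opn U -> U e ->
  exists U1 U2, opn U1 /\ opn U2 /\ U1 e /\ U2 e /\
    forall a b, U1 a -> U2 b -> U (mul a b).
Proof.
  intros HU HUe; apply (proj1 (proj2 (proj2 HG))); auto.
  rewrite mul1g; exact HUe.
Qed.

Lemma inv_nbhs_e U : opn U -> U e ->
  exists V, opn V /\ V e /\ forall a, V a -> U (inv a).
Proof.
  intros HU HUe; apply (proj2 (proj2 (proj2 HG))); auto.
  rewrite invg1; exact HUe.
Qed.

Lemma inv_mul_nbhs_e U : opn U -> U e ->
  exists V1 V2, opn V1 /\ opn V2 /\ V1 e /\ V2 e /\
    forall a b, V1 a -> V2 b -> U (mul (inv a) b).
Proof.
  intros HU HUe.
  destruct (mul_nbhs_e U HU HUe) as (U1 & U2 & HU1 & HU2 & HU1e & HU2e & HUU).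
  destruct (inv_nbhs_e U1 HU1 HU1e) as (V1 & HV1 & HV1e & HV1U).
  exists V1, U2; repeat split; auto.
Qed.

Lemma cvg_mul (s t : nat -> G) :
  seq_converges opn s e -> seq_converges opn t e ->
  seq_converges opn (fun n => mul (s n) (t n)) e.
Proof.
  intros Hs Ht U HU HUe.
  destruct (mul_nbhs_e U HU HUe) as (U1 & U2 & HU1 & HU2 & HU1e & HU2e & HUU).
  destruct (Hs U1 HU1 HU1e) as [N1 HN1]; destruct (Ht U2 HU2 HU2e) as [N2 HN2].
  exists (max N1 N2); intros n Hn.
  apply HUU; [apply HN1 | apply HN2]; lia.
Qed.

Lemma cvg_inv (s : nat -> G) :
  seq_converges opn s e -> seq_converges opn (fun n => inv (s n)) e.
Proof.
  intros Hs U HU HUe.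
  destruct (inv_nbhs_e U HU HUe) as (V & HV & HVe & HVU).
  destruct (Hs V HV HVe) as [N HN].
  exists N; auto.
Qed.

Lemma cvg_gpow (s : nat -> G) m :
  seq_converges opn s e -> seq_converges opn (fun n => gpow mul e (s n) m) e.
Proof.
  intros Hs; induction m as [|m IH].
  - intros U _ HUe; exists 0; auto.
  - exact (cvg_mul _ _ Hs IH).
Qed.

Lemma cvg_subseq (s : nat -> G) (f : nat -> nat) x :
  (forall k, k <= f k) -> seq_converges opn s x ->
  seq_converges opn (fun k => s (f k)) x.
Proof.
  intros Hf Hs U HU HUx.
  destruct (Hs U HU HUx) as [N HN].
  exists N; intros k Hk; apply HN.
  specialize (Hf k); lia.
Qed.

Definition in_all_nbhs_e (x : G) : Prop := forall U, opn U -> U e -> U x.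

Lemma cvg_in_all_nbhs_e (s : nat -> G) :
  (forall n, in_all_nbhs_e (s n)) -> seq_converges opn s e.
Proof. intros Hs U HU HUe; exists 0; intros n _; apply Hs; auto. Qed.

Lemma in_all_nbhs_e_gpow a m :
  in_all_nbhs_e a -> in_all_nbhs_e (gpow mul e a m).
Proof.
  intros Ha; induction m as [|m IH]; intros U HU HUe; [exact HUe|].
  destruct (mul_nbhs_e U HU HUe) as (U1 & U2 & HU1 & HU2 & HU1e & HU2e & HUU).
  apply HUU; [apply Ha | apply (IH U2)]; auto.
Qed.

Lemma not_in_all_nbhs_e x :
  ~ in_all_nbhs_e x -> exists U, opn U /\ U e /\ ~ U x.
Proof.
  intros Hx; apply NNPP; intros Hno; apply Hx.
  intros U HU HUe; apply NNPP; intros HUx; eauto.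
Qed.

Lemma nbhs_e_finite_inter (Q : nat -> G -> Prop) M :
  (forall m, m < M -> exists W, opn W /\ W e /\ forall x, W x -> Q m x) ->
  exists W, opn W /\ W e /\ forall m x, m < M -> W x -> Q m x.
Proof.
  induction M as [|M IH]; intros HQ.
  - exists (fun _ => True); repeat split; [apply open_setT | lia].
  - destruct IH as (W & HW & HWe & HWQ); [auto|].
    destruct (HQ M) as (W' & HW' & HW'e & HW'Q); [lia|].
    exists (fun x => W x /\ W' x); repeat split; auto using open_setI.
    intros m x Hm [Hx Hx']; destruct (Nat.eq_dec m M) as [->|HmM]; auto.
    apply HWQ; auto; lia.
Qed.

Lemma nbhs_e_avoid_finite (f : nat -> G) K :
  exists W, opn W /\ W e /\
    forall n, n < K -> ~ in_all_nbhs_e (f n) -> ~ W (f n).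
Proof.
  destruct (nbhs_e_finite_inter
              (fun n x => ~ in_all_nbhs_e (f n) -> x <> f n) K)
    as (W & HW & HWe & HWf).
  - intros n _; destruct (classic (in_all_nbhs_e (f n))) as [Hn|Hn].
    + exists (fun _ => True); repeat split; auto using open_setT.
    + destruct (not_in_all_nbhs_e _ Hn) as (U & HU & HUe & HUn).
      exists U; repeat split; auto.
      intros x Hx _ ->; contradiction.
  - exists W; repeat split; auto.
    intros n Hn Hfar HWn; exact (HWf n (f n) Hn HWn Hfar eq_refl).
Qed.

Lemma PS_frequently_in_all_nbhs_e (g : nat -> G) :
  (forall N, exists n, N <= n /\ in_all_nbhs_e (g n)) ->
  exists mk nk : nat -> nat,
    strictly_increasing mk /\ strictly_increasing nk /\
    seq_converges opn (fun k => gpow mul e (g (nk k)) (mk k)) e.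
Proof.
  intros Hfreq.
  destruct (strictly_increasing_chain (fun _ n => in_all_nbhs_e (g n)))
    as (f & Hf & Hgf).
  - intros j; destruct (Hfreq (S j)) as (n & Hn & Hgn); exists n; auto.
  - exists (fun k => k), (fun k => f (S k)); repeat split.
    + intros k; lia.
    + intros k; apply Hf.
    + apply cvg_in_all_nbhs_e; intros k; apply in_all_nbhs_e_gpow, Hgf.
Qed.

Section EventuallyFar.

Variables (g : nat -> G) (n0 : nat).
Hypothesis Hg : seq_converges opn g e.
Hypothesis Hfar : forall n, n0 <= n -> ~ in_all_nbhs_e (g n).

Let p m n := mul (gpow mul e (g n) m) (g m).

Let A x := exists m n, n0 <= m <= n /\ x = p m n /\ ~ in_all_nbhs_e x.

(* g_m = (g_n^m)^-1 p(m, n) with g_n^m -> e, so p(m, n) cannot approach e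
   without g_m lying in every neighbourhood of e. *)
Lemma row_eventually_far m : n0 <= m ->
  exists V K, opn V /\ V e /\ forall n, K <= n -> ~ V (p m n).
Proof.
  intros Hm.
  destruct (not_in_all_nbhs_e _ (Hfar m Hm)) as (O & HO & HOe & HOm).
  destruct (inv_mul_nbhs_e O HO HOe) as (V1 & V2 & HV1 & HV2 & HV1e & HV2e & HV).
  destruct (cvg_gpow g m Hg V1 HV1 HV1e) as [K HK].
  exists V2, K; repeat split; auto.
  intros n Hn Hp; apply HOm.
  rewrite <- (mulKg (gpow mul e (g n) m) (g m)); auto.
Qed.

Lemma e_in_closure_A : in_closure opn A e.
Proof.
  intros U HU HUe.
  destruct (mul_nbhs_e U HU HUe) as (U1 & U2 & HU1 & HU2 & HU1e & HU2e & HUU).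
  destruct (Hg U2 HU2 HU2e) as [N HN].
  set (m := max n0 N).
  destruct (row_eventually_far m) as (V & K & HV & HVe & HVp); [lia|].
  destruct (cvg_gpow g m Hg U1 HU1 HU1e) as [K' HK'].
  set (n := max m (max K K')).
  exists (p m n); split.
  - exists m, n; repeat split; try lia.
    intros Hnear; apply (HVp n); [lia | apply Hnear; auto].
  - apply HUU; [apply HK' | apply HN]; lia.
Qed.

Lemma rows_avoided M :
  exists W, opn W /\ W e /\
    forall m n, n0 <= m -> m < M -> ~ in_all_nbhs_e (p m n) -> ~ W (p m n).
Proof.
  destruct (nbhs_e_finite_inter
              (fun m x => forall n, n0 <= m -> ~ in_all_nbhs_e (p m n) -> x <> p m n) M)
    as (W & HW & HWe & HWp).
  - intros m _; destruct (le_lt_dec n0 m) as [Hm|Hm].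
    + destruct (row_eventually_far m Hm) as (V & K & HV & HVe & HVp).
      destruct (nbhs_e_avoid_finite (p m) K) as (W & HW & HWe & HWp).
      exists (fun x => W x /\ V x); repeat split; auto using open_setI.
      intros x [HWx HVx] n _ Hn ->.
      destruct (le_lt_dec K n); [apply (HVp n) | apply (HWp n)]; auto.
    + exists (fun _ => True); repeat split; auto using open_setT; lia.
  - exists W; repeat split; auto.
    intros m n Hm HmM Hn HWp'; exact (HWp m _ HmM HWp' n Hm Hn eq_refl).
Qed.

Lemma row_index_tends_to_infinity (s : nat -> G) (mj nj : nat -> nat) :
  seq_converges opn s e ->
  (forall j, n0 <= mj j <= nj j /\ s j = p (mj j) (nj j) /\ ~ in_all_nbhs_e (s j)) ->
  forall M, exists J, forall j, J <= j -> M <= mj j.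
Proof.
  intros Hs Hj M.
  destruct (rows_avoided M) as (W & HW & HWe & HWp).
  destruct (Hs W HW HWe) as [J HJ].
  exists J; intros j Hjj.
  destruct (Hj j) as ([Hm _] & Hsj & Hnear).
  destruct (le_lt_dec M (mj j)) as [|HmM]; auto.
  exfalso; rewrite Hsj in Hnear; apply (HWp _ _ Hm HmM Hnear).
  rewrite <- Hsj; auto.
Qed.

Hypothesis HFU : frechet_urysohn opn.

Lemma PS_eventually_far :
  exists mk nk : nat -> nat,
    strictly_increasing mk /\ strictly_increasing nk /\
    seq_converges opn (fun k => gpow mul e (g (nk k)) (mk k)) e.
Proof.
  destruct (HFU A e e_in_closure_A) as (s & HsA & Hs).
  destruct (choice (fun j (mn : nat * nat) =>
                      n0 <= fst mn <= snd mn /\ s j = p (fst mn) (snd mn) /\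
                      ~ in_all_nbhs_e (s j)))
    as [mn Hmn].
  { intros j; destruct (HsA j) as (m & n & Hmn & Hsj & Hnear); exists (m, n); auto. }
  set (mj j := fst (mn j)); set (nj j := snd (mn j)).
  assert (Hle : forall j, mj j <= nj j) by (intros j; apply Hmn).
  assert (Hinf := row_index_tends_to_infinity s mj nj Hs Hmn).
  destruct (strictly_increasing_chain (fun j j' => nj j < mj j')) as (f & Hf & Hfmn).
  { intros j; destruct (Hinf (S (nj j))) as [J HJ].
    exists (max J (S j)); split; [lia | apply HJ; lia]. }
  assert (Hmk : strictly_increasing (fun k => mj (f k))).
  { intros k; specialize (Hfmn k); specialize (Hle (f k)); lia. }
  exists (fun k => mj (f k)), (fun k => nj (f k)); repeat split; auto.
  - intros k; specialize (Hfmn k); specialize (Hle (f (S k))); lia.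
  - assert (Hprod := cvg_mul _ _
                       (cvg_subseq s f e (strictly_increasing_ge f Hf) Hs)
                       (cvg_inv _ (cvg_subseq g _ e (strictly_increasing_ge _ Hmk) Hg))).
    intros U HU HUe; destruct (Hprod U HU HUe) as [N HN]; exists N; intros k Hk.
    specialize (HN k Hk); cbn beta in HN.
    rewrite (proj1 (proj2 (Hmn (f k)))) in HN; unfold p in HN.
    rewrite mulgK in HN; exact HN.
Qed.

End EventuallyFar.

End TopologicalGroup.

Theorem mainTheorem11 (G : Type) (opn : (G -> Prop) -> Prop)
  (mul : G -> G -> G) (inv : G -> G) (e : G)
  (HG : is_topological_group opn mul inv e)
  (HFU : frechet_urysohn opn) :
  property_PS opn mul e.
Proof.
  intros g Hg.
  destruct (classic (exists n0, forall n, n0 <= n -> ~ in_all_nbhs_e G opn e (g n)))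
    as [[n0 Hfar] | Hnear].
  - exact (PS_eventually_far G opn mul inv e HG g n0 Hg Hfar HFU).
  - apply (PS_frequently_in_all_nbhs_e G opn mul inv e HG).
    intros N; apply NNPP; intros Hno; apply Hnear; exists N.
    intros n Hn Hgn; apply Hno; eauto.
Qed.
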